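(* Let $\kappa<\lambda$ be infinite regular cardinals. Then $\mathbb{P}(\lambda,\kappa)$ is $\lambda$-strategically closed.
   Context: For a set $C$ of ordinals, $C'=\{\alpha\in C\mid\sup(C\cap\alpha)=\alpha\}$. $\mathbb{P}(\lambda,\kappa)$ consists of conditions $p=\langle C^p_{\alpha,i}\mid\alpha\le\gamma^p,\ i(\alpha)^p\le i<\kappa\rangle$ such that: (1) $\gamma^p<\lambda$ is a limit ordinal and for all limit $\alpha\le\gamma^p$, $i(\alpha)^p<\kappa$; (2) for limit $\alpha\le\gamma^p$ and $i(\alpha)^p\le i<\kappa$, $C^p_{\alpha,i}$ is club in $\alpha$; (3) for limit $\alpha\le\gamma^p$ and $i(\alpha)^p\le i<j<\kappa$, $C^p_{\alpha,i}\subseteq C^p_{\alpha,j}$; (4) for limit $\alpha<\beta\le\gamma^p$ and $i(\beta)^p\le i<\kappa$, if $\alpha\in(C^p_{\beta,i})'$ then $i(\alpha)^p\le i$ and $C^p_{\beta,i}\cap\alpha=C^p_{\alpha,i}$; (5) for limit $\alpha<\beta\le\gamma^p$ there is $i<\kappa$ with $\alpha\in(C^p_{\beta,i})'$. The order is end-extension: $q\le p$ iff $\gamma^q\ge\gamma^p$ and for all limit $\alpha\le\gamma^p$, $i(\alpha)^q=i(\alpha)^p$ and $C^q_{\alpha,i}=C^p_{\alpha,i}$ for $i(\alpha)^p\le i<\kappa$. For a poset $\mathbb{P}$ and ordinal $\beta$, the game $G_\beta(\mathbb{P})$: players I and II alternately choose a decreasing sequence $\langle p_\alpha\mid\alpha<\beta\rangle$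 in $\mathbb{P}$ with $p_0=\mathbb{1}_{\mathbb{P}}$; I plays at odd stages and II at even stages (including all limit stages); I wins if at some even stage $\alpha<\beta$ II cannot play, otherwise II wins. $\mathbb{P}$ is $\beta$-strategically closed if II has a winning strategy in $G_\beta(\mathbb{P})$. *)

(* Ordinals below lambda are modelled by the elements of a
   well-ordered type (O, lt); lambda itself is (the order type of) O. *)
From Stdlib Require Import Relations Wellfounded.

Section PLK.
Variable O : Type.
Variable lt : O -> O -> Prop.
Variable kap : O.

Definition le (x y : O) : Prop := lt x y \/ x = y.

Definition is_wellorder : Prop :=
  well_founded lt /\ (forall x y z, lt x y -> lt y z -> lt x z) /\
  (forall x y, lt x y \/ x = y \/ lt y x).

Definition injective {A B : Type} (f : A -> B) : Prop :=
  forall a b, f a = f b -> a = b.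

Definition lambda_infinite_regular_cardinal : Prop :=
  (forall a : O, ~ exists f : O -> {x : O | lt x a}, injective f) /\
  (exists f : nat -> O, injective f) /\
  (forall S : O -> Prop, (forall x, exists y, S y /\ le x y) ->
     exists f : O -> {y : O | S y}, injective f).

Definition kappa_infinite_regular_cardinal : Prop :=
  (forall a, lt a kap -> ~ exists f : {x : O | lt x kap} -> {x : O | lt x a}, injective f) /\
  (exists f : nat -> {x : O | lt x kap}, injective f) /\
  (forall S : O -> Prop, (forall x, lt x kap -> exists y, S y /\ lt y kap /\ le x y) ->
     exists f : {x : O | lt x kap} -> {y : O | S y /\ lt y kap}, injective f).

Definition is_limit (a : O) : Prop :=
  (exists b, lt b a) /\ (forall b, lt b a -> exists c, lt b c /\ lt c a).

Definition acc_pt (C : O -> Prop) (a : O) : Prop :=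
  C a /\ (forall b, lt b a -> exists c, C c /\ lt b c /\ lt c a).

Definition club_in (a : O) (C : O -> Prop) : Prop :=
  (forall x, C x -> lt x a) /\
  (forall b, lt b a -> exists c, C c /\ lt b c) /\
  (forall d, lt d a -> (exists b, lt b d) ->
     (forall b, lt b d -> exists c, C c /\ lt b c /\ lt c d) -> C d).

(* raw data of a condition: gamma^p, alpha |-> i(alpha)^p,
   Cl a i x  <->  x \in C^p_{a,i}  (only relevant for limit a <= gamma,
   i(a) <= i < kappa) *)
Record cond_data : Type := mkCond {
  gam : O;
  iota : O -> O;
  Cl : O -> O -> O -> Prop }.

Definition valid (p : cond_data) : Prop :=
  is_limit (gam p) /\
  (forall a, is_limit a -> le a (gam p) -> lt (iota p a) kap) /\
  (forall a i, is_limit a -> le a (gam p) -> le (iota p a) i -> lt i kap ->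
     club_in a (Cl p a i)) /\
  (forall a i j, is_limit a -> le a (gam p) -> le (iota p a) i -> lt i j -> lt j kap ->
     forall x, Cl p a i x -> Cl p a j x) /\
  (forall a b i, is_limit a -> is_limit b -> lt a b -> le b (gam p) ->
     le (iota p b) i -> lt i kap -> acc_pt (Cl p b i) a ->
     le (iota p a) i /\ (forall x, (Cl p b i x /\ lt x a) <-> Cl p a i x)) /\
  (forall a b, is_limit a -> is_limit b -> lt a b -> le b (gam p) ->
     exists i, le (iota p b) i /\ lt i kap /\ acc_pt (Cl p b i) a).

(* the forcing P(lambda,kappa), with an adjoined top element 1 = None *)
Definition Pcond : Type := option {p : cond_data | valid p}.

Definition ext (q p : cond_data) : Prop :=
  le (gam p) (gam q) /\
  forall a, is_limit a -> le a (gam p) ->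
    iota q a = iota p a /\
    (forall i, le (iota p a) i -> lt i kap -> forall x, Cl q a i x <-> Cl p a i x).

Definition Ple (q p : Pcond) : Prop :=
  match q, p with
  | _, None => True
  | None, Some _ => False
  | Some q', Some p' => ext (proj1_sig q') (proj1_sig p')
  end.

(* parity of ordinals: a = d + n with d zero or limit, n even *)
Definition succ_of (b a : O) : Prop := lt b a /\ forall c, lt c a -> le c b.

Inductive is_even : O -> Prop :=
  | ev_lim : forall a, (forall b, lt b a -> exists c, lt b c /\ lt c a) -> is_even a
  | ev_ss : forall a b c, is_even a -> succ_of a b -> succ_of b c -> is_even c.

(* strategies for player II in G_lambda: a move at stage a is a function
   of the play strictly below a *)
Definition strategy : Type := forall a : O, ({x : O | lt x a} -> Pcond) -> Pcond.

Definition restr (p : O -> Pcond) (a : O) : {x : O | lt x a} -> Pcond :=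
  fun x => p (proj1_sig x).

Definition play_upto (s : strategy) (a : O) (p : O -> Pcond) : Prop :=
  (forall x y, lt x y -> lt y a -> Ple (p y) (p x)) /\
  (forall x, lt x a -> is_even x -> p x = s x (restr p x)).

Definition winning (s : strategy) : Prop :=
  forall a, is_even a -> forall p, play_upto s a p ->
    (forall x, lt x a -> Ple (s a (restr p a)) (p x)) /\
    ((forall x, ~ lt x a) -> s a (restr p a) = None).

Definition strategically_closed : Prop := exists s : strategy, winning s.

End PLK.

From Pilot Require Import Defs.
From Stdlib Require Import Classical ClassicalEpsilon ProofIrrelevance.

(* Player II keeps its own moves in a decreasing chain whose tops gamma increase, each earlier
   top being an accumulation point of every later top club from the common index i(gamma) on
   (the relation [caps] below).  At a stage y + 2, II extends I's condition p by a new top at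
   gamma^p + omega, whose clubs are C^p_{gamma^p,i} for large i and C^p_{beta,i} u {beta} for
   small i, where beta is the top of II's move at y, in both cases followed by the interval
   [gamma^p, gamma^p + omega).  At a limit stage II takes the union of its earlier moves and
   puts on top their supremum, with the unions of the earlier top clubs as clubs; [caps] makes
   these coherent, and the regularity of lambda keeps the supremum below lambda. *)

Section StrategicClosure.
Variables (O : Type) (lt : O -> O -> Prop) (kap : O).
Hypothesis WO : is_wellorder O lt.

Local Notation le := (Defs.le O lt).
Local Notation is_limit := (Defs.is_limit O lt).
Local Notation acc_pt := (Defs.acc_pt O lt).
Local Notation club_in := (Defs.club_in O lt).
Local Notation valid := (Defs.valid O lt kap).
Local Notation ext := (Defs.ext O lt kap).
Local Notation gam := (Defs.gam O).
Local Notation iota := (Defs.iota O).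
Local Notation Cl := (Defs.Cl O).

Lemma lt_trans x y z : lt x y -> lt y z -> lt x z.
Proof. destruct WO as [_ [H _]]; eauto. Qed.

Lemma lt_total x y : lt x y \/ x = y \/ lt y x.
Proof. destruct WO as [_ [_ H]]; eauto. Qed.

Lemma lt_irrefl x : ~ lt x x.
Proof.
  destruct WO as [W _]. induction (W x) as [x _ IH]. intro h. exact (IH x h h).
Qed.

Lemma lt_asym x y : lt x y -> ~ lt y x.
Proof. intros h1 h2. exact (lt_irrefl x (lt_trans _ _ _ h1 h2)). Qed.

Lemma le_refl x : le x x.
Proof. right; reflexivity. Qed.

Lemma lt_le_incl x y : lt x y -> le x y.
Proof. left; auto. Qed.

Lemma not_lt_le x y : ~ lt x y -> le y x.
Proof. intro h. destruct (lt_total x y) as [a|[a|a]]; [tauto|right; auto|left; auto]. Qed.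

Lemma le_not_lt x y : le x y -> ~ lt y x.
Proof. intros [h| ->] h2; [exact (lt_asym _ _ h h2)|exact (lt_irrefl _ h2)]. Qed.

Lemma le_trans x y z : le x y -> le y z -> le x z.
Proof. intros [h| ->] [h'| ->]; auto using lt_le_incl, le_refl. left; eauto using lt_trans. Qed.

Lemma le_lt_trans x y z : le x y -> lt y z -> lt x z.
Proof. intros [h| ->] h'; eauto using lt_trans. Qed.

Lemma lt_le_trans x y z : lt x y -> le y z -> lt x z.
Proof. intros h [h'| <-]; eauto using lt_trans. Qed.

Lemma le_antisym x y : le x y -> le y x -> x = y.
Proof. intros [h|h] h'; auto. exfalso; exact (le_not_lt _ _ h' h). Qed.

Lemma le_total x y : le x y \/ le y x.
Proof. destruct (lt_total x y) as [a|[a|a]]; [left; left|left; right|right; left]; auto. Qed.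

Lemma exists_least (P : O -> Prop) :
  (exists x, P x) -> exists x, P x /\ forall y, P y -> ~ lt y x.
Proof.
  destruct WO as [W _]. intros [x Hx]. revert Hx. induction (W x) as [x _ IH]. intro Hx.
  destruct (classic (exists y, P y /\ lt y x)) as [[y [Py ly]]|N].
  - exact (IH y ly Py).
  - exists x; split; auto. intros y Py ly. apply N; eauto.
Qed.

Lemma acc_pt_mono (C D : O -> Prop) a : (forall x, C x -> D x) -> acc_pt C a -> acc_pt D a.
Proof.
  intros H [h1 h2]; split; auto.
  intros b hb. destruct (h2 b hb) as [c [? ?]]. exists c; split; auto.
Qed.

Lemma acc_pt_agree_below (C D : O -> Prop) a u :
  lt a u -> (forall x, lt x u -> (C x <-> D x)) -> acc_pt C a -> acc_pt D a.
Proof.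
  intros ha H [h1 h2]; split; [apply H; auto|].
  intros b hb. destruct (h2 b hb) as [c [hc [? hc2]]]. exists c; split; auto.
  apply H; eauto using lt_trans.
Qed.

Lemma club_in_ext a (C D : O -> Prop) : (forall x, C x <-> D x) -> club_in a C -> club_in a D.
Proof.
  intros H [h1 [h2 h3]]. split; [|split].
  - intros x hx; apply h1, H; auto.
  - intros b hb; destruct (h2 b hb) as [c [? ?]]; exists c; split; auto; apply H; auto.
  - intros d hd hb hc. apply H, h3; auto. intros b lb. destruct (hc b lb) as [c [? ?]].
    exists c; split; auto; apply H; auto.
Qed.

Lemma club_in_closed a C d : club_in a C -> lt d a -> (exists b, lt b d) ->
  (forall b, lt b d -> exists c, C c /\ lt b c /\ lt c d) -> C d.
Proof. intros [_ [_ h]]; eauto. Qed.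

Lemma ext_refl p : ext p p.
Proof. split; [apply le_refl|]. intros; split; auto; tauto. Qed.

Lemma ext_trans r q p : ext r q -> ext q p -> ext r p.
Proof.
  intros [g1 h1] [g2 h2]. split; [eapply le_trans; eauto|].
  intros a la lea. destruct (h2 a la lea) as [e2 c2].
  destruct (h1 a la (le_trans _ _ _ lea g2)) as [e1 c1]. split; [congruence|].
  intros i hi hk x. rewrite c1; [apply c2|rewrite e2|]; auto.
Qed.

Local Notation succ_of := (Defs.succ_of O lt).

Lemma succ_of_not_limit w x : succ_of w x -> ~ is_limit x.
Proof.
  intros [wx hx] [_ h]. destruct (h w wx) as [c [wc cx]]. exact (le_not_lt _ _ (hx c cx) wc).
Qed.

Hypothesis LR : lambda_infinite_regular_cardinal O lt.
Hypothesis KR : kappa_infinite_regular_cardinal O lt kap.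

Lemma exists_gt x : exists z, lt x z.
Proof.
  apply NNPP; intro N. destruct LR as [_ [[g gi] L3]].
  destruct (L3 (fun y => y = x)) as [f fi].
  { intro w. exists x; split; auto. apply not_lt_le. intro h; apply N; eauto. }
  assert (E : g 0 = g 1).
  { apply fi. destruct (f (g 0)) as [u hu], (f (g 1)) as [v hv].
    apply subset_eq_compat. congruence. }
  apply gi in E. discriminate.
Qed.

Lemma bounded_of_injection (S : O -> Prop) c (h : {y | S y} -> {x | lt x c}) :
  injective h -> exists u, forall y, S y -> lt y u.
Proof.
  intro hi. apply NNPP; intro N. destruct LR as [L1 [_ L3]].
  destruct (L3 S) as [f fi].
  { intro x. apply NNPP; intro M. apply N. exists x. intros y Sy. apply NNPP; intro K.
    apply M; exists y; split; auto. apply not_lt_le; auto. }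
  apply (L1 c). exists (fun x => h (f x)). intros u v e. apply fi, hi, e.
Qed.

Lemma image_bounded (A : Type) c (k : A -> {x | lt x c}) (F : A -> O) :
  injective k -> exists u, forall x, lt (F x) u.
Proof.
  intro ki.
  pose (pick := fun y : {u | exists x, F x = u} =>
    proj1_sig (constructive_indefinite_description _ (proj2_sig y))).
  destruct (bounded_of_injection (fun u => exists x, F x = u) c (fun y => k (pick y)))
    as [u hu].
  - intros [y hy] [z hz] e. apply ki in e. apply subset_eq_compat. unfold pick in e. simpl in e.
    destruct (constructive_indefinite_description _ hy) as [x <-].
    destruct (constructive_indefinite_description _ hz) as [x' <-]. simpl in e. congruence.
  - exists u. intro x. apply hu. eauto.
Qed.

Definition osucc (x : O) : O := epsilon (inhabits x) (succ_of x).

Lemma succ_of_osucc x : succ_of x (osucc x).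
Proof.
  unfold osucc. apply epsilon_spec.
  destruct (exists_least (lt x) (exists_gt x)) as [z [xz hz]].
  exists z. split; auto. intros c cz. apply not_lt_le. intro xc. exact (hz c xc cz).
Qed.

Definition omega_seq (g : O) (n : nat) : O := Nat.iter n osucc g.

Lemma omega_seq_lt g n m : (n < m)%nat -> lt (omega_seq g n) (omega_seq g m).
Proof.
  induction 1; simpl; [apply succ_of_osucc|].
  eapply lt_trans; [eassumption|apply succ_of_osucc].
Qed.

Lemma omega_seq_ge g n : le g (omega_seq g n).
Proof. destruct n; [apply le_refl|]. left. apply (omega_seq_lt g 0). auto with arith. Qed.

Lemma omega_seq_between g n x : le g x -> lt x (omega_seq g n) -> exists m, x = omega_seq g m.
Proof.
  induction n as [|n IH]; intros h1 h2; simpl in h2.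
  - exfalso; exact (le_not_lt _ _ h1 h2).
  - destruct (proj2 (succ_of_osucc _) x h2) as [l|l]; eauto.
Qed.

Definition is_omega_limit g u : Prop :=
  (forall n, lt (omega_seq g n) u) /\ forall v, (forall n, lt (omega_seq g n) v) -> ~ lt v u.

Definition omega_limit (g : O) : O := epsilon (inhabits g) (is_omega_limit g).

Lemma omega_limit_spec g : is_omega_limit g (omega_limit g).
Proof.
  unfold omega_limit. apply epsilon_spec.
  destruct KR as [_ [[k ki] _]].
  destruct (image_bounded nat kap k (omega_seq g) ki) as [u hu].
  apply exists_least. eauto.
Qed.

Lemma omega_limit_gt g : lt g (omega_limit g).
Proof. apply (proj1 (omega_limit_spec g) 0). Qed.

Lemma omega_limit_below g b : lt b (omega_limit g) -> exists n, le b (omega_seq g n).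
Proof.
  intro hb. apply NNPP; intro N. apply (proj2 (omega_limit_spec g) b); auto.
  intro n. apply NNPP; intro M. apply N; exists n. apply not_lt_le; auto.
Qed.

Lemma omega_limit_is_limit g : is_limit (omega_limit g).
Proof.
  split; [exists g; apply omega_limit_gt|].
  intros b hb. destruct (omega_limit_below g b hb) as [n hn]. exists (omega_seq g (S n)).
  split; [eapply le_lt_trans; [eassumption|apply omega_seq_lt; auto]|].
  apply (proj1 (omega_limit_spec g)).
Qed.

Lemma omega_limit_interval_succ g x :
  lt g x -> lt x (omega_limit g) -> exists w, succ_of w x.
Proof.
  intros h1 h2. destruct (omega_limit_below g x h2) as [n hn].
  assert (exists m, x = omega_seq g m) as [[|m] ->].
  { destruct hn as [hn| ->]; eauto. eapply omega_seq_between; eauto using lt_le_incl. }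
  - exfalso; exact (lt_irrefl _ h1).
  - exists (omega_seq g m). apply succ_of_osucc.
Qed.

Lemma limit_le_omega_limit g a :
  is_limit a -> le a (omega_limit g) -> le a g \/ a = omega_limit g.
Proof.
  intros la [h|h]; auto. left. apply not_lt_le. intro ga.
  destruct (omega_limit_interval_succ g a ga h) as [w hw]. exact (succ_of_not_limit w a hw la).
Qed.

Lemma club_in_closed_transfer a (C D : O -> Prop) d : club_in a C -> lt d a ->
  (exists b, lt b d) -> (forall x, lt x d -> D x -> C x) ->
  (forall b, lt b d -> exists c, D c /\ lt b c /\ lt c d) -> C d.
Proof.
  intros HC hd hb HDC hc. apply (club_in_closed a C d HC hd hb).
  intros e le_. destruct (hc e le_) as [c [Dc [ec cd]]]. exists c; auto.
Qed.

Section ValidCondition.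
Variable p : cond_data O.
Hypothesis Hp : valid p.

Lemma valid_gam_limit : is_limit (gam p).
Proof. apply Hp. Qed.

Lemma valid_iota_lt a : is_limit a -> le a (gam p) -> lt (iota p a) kap.
Proof. apply Hp. Qed.

Lemma valid_club a i : is_limit a -> le a (gam p) -> le (iota p a) i -> lt i kap ->
  club_in a (Cl p a i).
Proof. apply Hp. Qed.

Lemma valid_Cl_lt a i x : is_limit a -> le a (gam p) -> le (iota p a) i -> lt i kap ->
  Cl p a i x -> lt x a.
Proof. intros la ag hi hk. apply (valid_club a i la ag hi hk). Qed.

Lemma valid_Cl_mono a i j x : is_limit a -> le a (gam p) -> le (iota p a) i -> le i j ->
  lt j kap -> Cl p a i x -> Cl p a j x.
Proof. intros la ag hi [ij| <-] hk; [apply Hp|]; auto. Qed.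

Lemma valid_coherent a c i : is_limit a -> is_limit c -> lt a c -> le c (gam p) ->
  le (iota p c) i -> lt i kap -> acc_pt (Cl p c i) a ->
  le (iota p a) i /\ forall x, (Cl p c i x /\ lt x a) <-> Cl p a i x.
Proof. apply Hp. Qed.

Lemma valid_threads a c : is_limit a -> is_limit c -> lt a c -> le c (gam p) ->
  exists i, le (iota p c) i /\ lt i kap /\ acc_pt (Cl p c i) a.
Proof. apply Hp. Qed.

Lemma valid_coherent_transfer (C : O -> Prop) c a i : is_limit c -> le c (gam p) ->
  le (iota p c) i -> lt i kap -> is_limit a -> le a c ->
  (forall x, lt x c -> (C x <-> Cl p c i x)) -> acc_pt C a ->
  le (iota p a) i /\ forall x, (C x /\ lt x a) <-> Cl p a i x.
Proof.
  intros lc cg hi hk la [ac| ->] HC A.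
  - destruct (valid_coherent a c i la lc ac cg hi hk) as [E1 E2].
    { eapply acc_pt_agree_below; [exact ac|exact HC|exact A]. }
    split; auto. intro x. rewrite <- E2.
    split; intros [Cx xa]; split; auto; apply HC; eauto using lt_trans.
  - split; auto. intro x. split.
    + intros [Cx xc]. apply HC; auto.
    + intro Cx. assert (xc : lt x c) by exact (valid_Cl_lt c i x lc cg hi hk Cx).
      split; auto. apply HC; auto.
Qed.

End ValidCondition.

Section SuccessorExtension.
Variables (P : cond_data O) (beta i0 j0 : O).
Hypotheses (HP : valid P) (Hbeta : is_limit beta) (Hbeta_le : le beta (gam P))
  (Hi0 : le (iota P beta) i0) (Hi0k : lt i0 kap) (Hj0 : le i0 j0) (Hj0k : lt j0 kap)
  (Hj0g : le (iota P (gam P)) j0)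
  (Hj0acc : lt beta (gam P) -> acc_pt (Cl P (gam P) j0) beta).

Local Notation g := (gam P).
Local Notation b := (omega_limit (gam P)).

(* Below the threshold j0 the new top club keeps beta, the top of II's previous move, as an
   accumulation point; from j0 on beta already lies in C^P_{g,i}. *)
Definition succ_top (i x : O) : Prop :=
  (le j0 i /\ Cl P g i x) \/ (~ le j0 i /\ (Cl P beta i x \/ x = beta)) \/ (le g x /\ lt x b).

Let Hg := valid_gam_limit P HP.

Lemma beta_lt_top : lt beta b.
Proof. eapply le_lt_trans; [exact Hbeta_le|apply omega_limit_gt]. Qed.

Lemma le_i0_iota_beta i : le i0 i -> le (iota P beta) i.
Proof. intro; eapply le_trans; eauto. Qed.

Lemma le_j0_iota_gam i : le j0 i -> le (iota P g) i.
Proof. intro; eapply le_trans; eauto. Qed.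

Lemma Cl_gam_lt i x : le j0 i -> lt i kap -> Cl P g i x -> lt x g.
Proof. intros J hk. exact (valid_Cl_lt P HP g i x Hg (le_refl _) (le_j0_iota_gam i J) hk). Qed.

Lemma Cl_beta_lt i x : le i0 i -> lt i kap -> Cl P beta i x -> lt x beta.
Proof. intros hi hk. exact (valid_Cl_lt P HP beta i x Hbeta Hbeta_le (le_i0_iota_beta i hi) hk). Qed.

Lemma beta_in_Cl_gam i : le j0 i -> lt i kap -> lt beta g ->
  Cl P g i beta /\ forall x, Cl P beta i x -> Cl P g i x.
Proof.
  intros J hk bg. assert (A : acc_pt (Cl P g i) beta).
  { eapply acc_pt_mono; [|exact (Hj0acc bg)]. intro x.
    apply (valid_Cl_mono P HP g j0 i x Hg (le_refl _) Hj0g J hk). }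
  split; [apply A|]. intros x hx.
  apply (valid_coherent P HP beta g i Hbeta Hg bg (le_refl _) (le_j0_iota_gam i J) hk A); auto.
Qed.

Lemma succ_top_high i x : le j0 i -> lt x g -> (succ_top i x <-> Cl P g i x).
Proof.
  intros J xg. split.
  - intros [[_ C]|[[N _]|[C _]]]; [exact C|contradiction|exfalso; exact (le_not_lt _ _ C xg)].
  - intro C; left; auto.
Qed.

Lemma succ_top_low i x : ~ le j0 i -> lt x g -> (succ_top i x <-> Cl P beta i x \/ x = beta).
Proof.
  intros J xg. split.
  - intros [[N _]|[[_ C]|[C _]]]; [contradiction|exact C|exfalso; exact (le_not_lt _ _ C xg)].
  - intro C; right; left; auto.
Qed.

Lemma succ_top_low_above_beta i c : le i0 i -> lt i kap -> ~ le j0 i -> lt c g -> lt beta c ->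
  ~ succ_top i c.
Proof.
  intros hi hk J cg bc C. apply (succ_top_low i c J cg) in C.
  destruct C as [C| ->]; [exact (lt_asym _ _ bc (Cl_beta_lt i c hi hk C))|exact (lt_irrefl _ bc)].
Qed.

Lemma succ_top_interval i x : le g x -> lt x b -> succ_top i x.
Proof. right; right; auto. Qed.

Lemma beta_in_succ_top i : le i0 i -> lt i kap -> succ_top i beta.
Proof.
  intros hi hk. destruct (classic (le j0 i)) as [J|J].
  - destruct Hbeta_le as [bg|bg].
    + left; split; auto. exact (proj1 (beta_in_Cl_gam i J hk bg)).
    + apply succ_top_interval; [rewrite bg; apply le_refl|apply beta_lt_top].
  - right; left; auto.
Qed.

Lemma Cl_beta_sub_succ_top i x : le i0 i -> lt i kap -> Cl P beta i x -> succ_top i x.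
Proof.
  intros hi hk C. destruct (classic (le j0 i)) as [J|J].
  - left; split; auto. destruct Hbeta_le as [bg| <-]; auto. apply (beta_in_Cl_gam i J hk bg); auto.
  - right; left; auto.
Qed.

Lemma succ_top_lt i x : le i0 i -> lt i kap -> succ_top i x -> lt x b.
Proof.
  intros hi hk [[J C]|[[_ [C| ->]]|[_ xb]]]; auto.
  - eapply lt_trans; [exact (Cl_gam_lt i x J hk C)|apply omega_limit_gt].
  - eapply lt_trans; [exact (Cl_beta_lt i x hi hk C)|apply beta_lt_top].
  - apply beta_lt_top.
Qed.

Lemma succ_top_closed_below_gam i d : le i0 i -> lt i kap -> lt d g -> (exists e, lt e d) ->
  (forall e, lt e d -> exists c, succ_top i c /\ lt e c /\ lt c d) -> succ_top i d.
Proof.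
  intros hi hk dg hd hc. destruct (classic (le j0 i)) as [J|J].
  - apply (succ_top_high i d J dg).
    apply (club_in_closed_transfer g _ (succ_top i) d
             (valid_club P HP g i Hg (le_refl _) (le_j0_iota_gam i J) hk) dg hd); auto.
    intros x xd. apply (succ_top_high i x J). eauto using lt_trans.
  - apply (succ_top_low i d J dg). destruct (lt_total d beta) as [db|[db|db]]; auto.
    + left. apply (club_in_closed_transfer beta _ (succ_top i) d
               (valid_club P HP beta i Hbeta Hbeta_le (le_i0_iota_beta i hi) hk) db hd); auto.
      intros x xd C. apply (succ_top_low i x J) in C; [|eauto using lt_trans].
      destruct C as [C| ->]; auto. exfalso; exact (lt_asym _ _ xd db).
    + exfalso. destruct (hc beta db) as [c [C [bc cd]]].
      exact (succ_top_low_above_beta i c hi hk J (lt_trans _ _ _ cd dg) bc C).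
Qed.

Lemma succ_top_club i : le i0 i -> lt i kap -> club_in b (succ_top i).
Proof.
  intros hi hk. split; [|split].
  - intro x; apply succ_top_lt; auto.
  - intros c hc. destruct (omega_limit_below g c hc) as [n hn].
    exists (omega_seq g (S n)). split.
    + apply succ_top_interval; [apply omega_seq_ge|apply omega_limit_spec].
    + eapply le_lt_trans; [exact hn|apply omega_seq_lt; auto].
  - intros d hd hex hc. destruct (classic (lt d g)) as [dg|dg].
    + apply succ_top_closed_below_gam; auto.
    + apply succ_top_interval; auto. apply not_lt_le; auto.
Qed.

Lemma succ_top_coherent a i : is_limit a -> lt a b -> le i0 i -> lt i kap ->
  acc_pt (succ_top i) a -> le (iota P a) i /\ forall x, (succ_top i x /\ lt x a) <-> Cl P a i x.
Proof.
  intros la ab hi hk A.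
  destruct (limit_le_omega_limit g a la (lt_le_incl _ _ ab)) as [ag| ->];
    [|exfalso; exact (lt_irrefl _ ab)].
  destruct (classic (le j0 i)) as [J|J].
  - apply (valid_coherent_transfer P HP (succ_top i) g a i Hg (le_refl _)
             (le_j0_iota_gam i J) hk la ag); auto.
    intros x xg; apply succ_top_high; auto.
  - destruct (classic (lt beta a)) as [ba|ba].
    + exfalso. destruct (proj2 A beta ba) as [c [C [bc ca]]].
      exact (succ_top_low_above_beta i c hi hk J (lt_le_trans _ _ _ ca ag) bc C).
    + apply (valid_coherent_transfer P HP (succ_top i) beta a i Hbeta Hbeta_le
               (le_i0_iota_beta i hi) hk la (not_lt_le _ _ ba)); auto.
      intros x xb. rewrite (succ_top_low i x J); [|eapply lt_le_trans; eauto].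
      split; [intros [C| ->]; [exact C|exfalso; exact (lt_irrefl _ xb)]|left; auto].
Qed.

Lemma succ_top_mono i j x : le i0 i -> lt i j -> lt j kap -> succ_top i x -> succ_top j x.
Proof.
  intros hi ij hk C. assert (hj : le i0 j) by (eapply le_trans; [exact hi|left; exact ij]).
  assert (hik : lt i kap) by (eapply lt_trans; eauto).
  destruct C as [[J C]|[[J [C| ->]]|C]].
  - left. split; [eapply le_trans; [exact J|left; exact ij]|].
    exact (valid_Cl_mono P HP g i j x Hg (le_refl _) (le_j0_iota_gam i J) (lt_le_incl _ _ ij) hk C).
  - apply Cl_beta_sub_succ_top; auto.
    exact (valid_Cl_mono P HP beta i j x Hbeta Hbeta_le (le_i0_iota_beta i hi)
             (lt_le_incl _ _ ij) hk C).
  - apply beta_in_succ_top; auto.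
  - right; right; auto.
Qed.

Lemma succ_top_threads a : is_limit a -> lt a b ->
  exists i, le i0 i /\ lt i kap /\ acc_pt (succ_top i) a.
Proof.
  intros la ab.
  destruct (limit_le_omega_limit g a la (lt_le_incl _ _ ab)) as [[ag| ->]| ->];
    [|exists j0; split; auto; split; auto|exfalso; exact (lt_irrefl _ ab)].
  - destruct (valid_threads P HP a g la Hg ag (le_refl _)) as [i1 [h1 [hk A]]].
    destruct (le_total i1 j0) as [l|l].
    + exists j0. split; auto. split; auto. eapply acc_pt_mono; [|exact A].
      intros x C. left. split; [apply le_refl|].
      exact (valid_Cl_mono P HP g i1 j0 x Hg (le_refl _) h1 l Hj0k C).
    + exists i1. split; [eapply le_trans; eauto|]. split; auto.
      eapply acc_pt_mono; [|exact A]. intros x C. left; auto.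
  - split; [apply succ_top_interval; [apply le_refl|apply omega_limit_gt]|].
    intros e eg. destruct (valid_club P HP g j0 Hg (le_refl _) Hj0g Hj0k) as [Hlt [Hunb _]].
    destruct (Hunb e eg) as [c [C ec]]. exists c. split; [left; split; auto; apply le_refl|auto].
Qed.

Lemma beta_acc_pt_succ_top i : le i0 i -> lt i kap -> acc_pt (succ_top i) beta.
Proof.
  intros hi hk. split; [apply beta_in_succ_top; auto|].
  intros e eb. destruct (valid_club P HP beta i Hbeta Hbeta_le (le_i0_iota_beta i hi) hk)
    as [Hlt [Hunb _]].
  destruct (Hunb e eb) as [c [C ec]]. exists c. split; [apply Cl_beta_sub_succ_top; auto|auto].
Qed.

Definition succ_ext : cond_data O :=
  mkCond O b (fun a => if excluded_middle_informative (a = b) then i0 else iota P a)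
    (fun a i x => if excluded_middle_informative (a = b) then succ_top i x else Cl P a i x).

Lemma succ_ext_top_iota : iota succ_ext b = i0.
Proof. simpl. destruct (excluded_middle_informative (b = b)); tauto. Qed.

Lemma succ_ext_top_Cl : Cl succ_ext b = succ_top.
Proof. simpl. destruct (excluded_middle_informative (b = b)); tauto. Qed.

Lemma succ_ext_below a : le a g -> iota succ_ext a = iota P a /\ Cl succ_ext a = Cl P a.
Proof.
  intro ag. assert (n : a <> b) by (intros ->; exact (le_not_lt _ _ ag (omega_limit_gt g))).
  simpl. destruct (excluded_middle_informative (a = b)); tauto.
Qed.

Lemma succ_ext_club a i : is_limit a -> le a (gam succ_ext) -> le (iota succ_ext a) i ->
  lt i kap -> club_in a (Cl succ_ext a i).
Proof.
  intros la ab hi hk. destruct (limit_le_omega_limit g a la ab) as [ag| ->].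
  - destruct (succ_ext_below a ag) as [E1 E2]. rewrite E1 in hi. rewrite E2.
    apply (valid_club P HP); auto.
  - rewrite succ_ext_top_iota in hi. rewrite succ_ext_top_Cl. apply succ_top_club; auto.
Qed.

Lemma succ_ext_coherent a c i : is_limit a -> is_limit c -> lt a c -> le c (gam succ_ext) ->
  le (iota succ_ext c) i -> lt i kap -> acc_pt (Cl succ_ext c i) a ->
  le (iota succ_ext a) i /\ forall x, (Cl succ_ext c i x /\ lt x a) <-> Cl succ_ext a i x.
Proof.
  intros la lc ac cb hi hk A. destruct (limit_le_omega_limit g c lc cb) as [cg| ->].
  - assert (ag : le a g) by (left; eapply lt_le_trans; eauto).
    destruct (succ_ext_below a ag) as [-> ->]. destruct (succ_ext_below c cg) as [E1 E2].
    rewrite E1 in hi. rewrite E2 in A |- *. apply (valid_coherent P HP); auto.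
  - rewrite succ_ext_top_iota in hi. rewrite succ_ext_top_Cl in A |- *.
    destruct (limit_le_omega_limit g a la (lt_le_incl _ _ ac)) as [ag| ->];
      [|exfalso; exact (lt_irrefl _ ac)].
    destruct (succ_ext_below a ag) as [-> ->]. apply succ_top_coherent; auto.
Qed.

Lemma succ_ext_threads a c : is_limit a -> is_limit c -> lt a c -> le c (gam succ_ext) ->
  exists i, le (iota succ_ext c) i /\ lt i kap /\ acc_pt (Cl succ_ext c i) a.
Proof.
  intros la lc ac cb. destruct (limit_le_omega_limit g c lc cb) as [cg| ->].
  - destruct (succ_ext_below c cg) as [-> ->]. apply (valid_threads P HP); auto.
  - rewrite succ_ext_top_iota, succ_ext_top_Cl. apply succ_top_threads; auto.
Qed.

Lemma succ_ext_valid : valid succ_ext.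
Proof.
  split; [apply omega_limit_is_limit|]. split.
  { intros a la ab. destruct (limit_le_omega_limit g a la ab) as [ag| ->].
    - rewrite (proj1 (succ_ext_below a ag)). apply (valid_iota_lt P HP); auto.
    - rewrite succ_ext_top_iota; auto. }
  split; [exact succ_ext_club|]. split.
  { intros a i j la ab hi ij hk x. destruct (limit_le_omega_limit g a la ab) as [ag| ->].
    - destruct (succ_ext_below a ag) as [E1 ->]. rewrite E1 in hi. apply HP; auto.
    - rewrite succ_ext_top_iota in hi. rewrite succ_ext_top_Cl. apply succ_top_mono; auto. }
  split; [exact succ_ext_coherent|exact succ_ext_threads].
Qed.

Lemma succ_ext_ext : ext succ_ext P.
Proof.
  split; [left; apply omega_limit_gt|]. intros a la ag.
  destruct (succ_ext_below a ag) as [-> ->]. split; auto; tauto.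
Qed.

Lemma succ_ext_beta_acc_pt i : le i0 i -> lt i kap -> acc_pt (Cl succ_ext b i) beta.
Proof. rewrite succ_ext_top_Cl. apply beta_acc_pt_succ_top. Qed.

End SuccessorExtension.

(* The invariant that II maintains between its own moves Q (later) and P (earlier). *)
Definition caps (Q P : cond_data O) : Prop :=
  lt (gam P) (gam Q) /\ iota Q (gam Q) = iota P (gam P) /\
  forall i, le (iota P (gam P)) i -> lt i kap -> acc_pt (Cl Q (gam Q) i) (gam P).

Lemma caps_Cl_below Q P i x : valid Q -> valid P -> ext Q P -> caps Q P ->
  le (iota P (gam P)) i -> lt i kap -> lt x (gam P) ->
  (Cl Q (gam Q) i x <-> Cl P (gam P) i x).
Proof.
  intros VQ VP [_ X] [lPQ [IQ A]] hi hk xP.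
  destruct (X (gam P) (valid_gam_limit P VP) (le_refl _)) as [X1 X2].
  destruct (valid_coherent Q VQ (gam P) (gam Q) i (valid_gam_limit P VP)
              (valid_gam_limit Q VQ) lPQ (le_refl _) ltac:(rewrite IQ; auto) hk (A i hi hk))
    as [_ C].
  rewrite <- X2, <- C; auto. tauto.
Qed.

Lemma caps_trans Q R P : valid Q -> valid R -> valid P -> ext Q R -> caps Q R -> caps R P ->
  caps Q P.
Proof.
  intros VQ VR VP XQR [lRQ [IQ AQ]] [lPR [IR AR]].
  split; [eapply lt_trans; eauto|]. split; [congruence|].
  intros i hi hk.
  eapply acc_pt_agree_below; [exact lPR| |exact (AR i hi hk)].
  intros x xR. symmetry. apply (caps_Cl_below Q R i x); auto; [split; auto|congruence].
Qed.

Definition top_threshold_spec (P : cond_data O) (beta i0 j : O) : Prop :=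
  le i0 j /\ lt j kap /\ le (iota P (gam P)) j /\
  (lt beta (gam P) -> acc_pt (Cl P (gam P) j) beta).

Definition top_threshold (P : cond_data O) (beta i0 : O) : O :=
  epsilon (inhabits i0) (top_threshold_spec P beta i0).

Lemma top_threshold_correct P beta i0 : valid P -> is_limit beta -> le beta (gam P) ->
  lt i0 kap -> top_threshold_spec P beta i0 (top_threshold P beta i0).
Proof.
  intros HP lb bg hk. unfold top_threshold. apply epsilon_spec.
  assert (lg := valid_gam_limit P HP).
  assert (hg := valid_iota_lt P HP (gam P) lg (le_refl _)).
  destruct bg as [bg| ->].
  - destruct (valid_threads P HP beta (gam P) lb lg bg (le_refl _)) as [i1 [h1 [hk1 A]]].
    destruct (le_total i1 i0) as [l|l].
    + exists i0. split; [apply le_refl|]. split; [exact hk|]. split; [eapply le_trans; eauto|].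
      intros _. eapply acc_pt_mono; [|exact A]. intro x.
      apply (valid_Cl_mono P HP (gam P) i1 i0 x lg (le_refl _) h1 l hk).
    + exists i1. split; [exact l|]. split; [exact hk1|]. split; auto.
  - destruct (le_total i0 (iota P (gam P))) as [l|l].
    + exists (iota P (gam P)). split; auto. split; auto. split; [apply le_refl|].
      intro h; exfalso; exact (lt_irrefl _ h).
    + exists i0. split; [apply le_refl|]. split; auto. split; auto.
      intro h; exfalso; exact (lt_irrefl _ h).
Qed.

(* II's answer to I's move P, when II's own previous move was R. *)
Definition succ_step (P R : cond_data O) : cond_data O :=
  let i0 := iota R (gam R) in succ_ext P (gam R) i0 (top_threshold P (gam R) i0).

Lemma succ_step_correct P R : valid P -> valid R -> ext P R ->
  valid (succ_step P R) /\ ext (succ_step P R) P /\ caps (succ_step P R) R.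
Proof.
  intros VP VR [RP X]. assert (lR := valid_gam_limit R VR).
  assert (hk := valid_iota_lt R VR (gam R) lR (le_refl _)).
  destruct (X (gam R) lR (le_refl _)) as [X1 _].
  assert (hi : le (iota P (gam R)) (iota R (gam R))) by (rewrite X1; apply le_refl).
  destruct (top_threshold_correct P (gam R) (iota R (gam R)) VP lR RP hk) as [J1 [J2 [J3 J4]]].
  unfold succ_step. split; [apply succ_ext_valid; auto|]. split; [apply succ_ext_ext|].
  split; [simpl; eapply le_lt_trans; [exact RP|apply omega_limit_gt]|]. split.
  - apply succ_ext_top_iota.
  - intros i h1 h2. apply succ_ext_beta_acc_pt; auto.
Qed.

Section LimitExtension.
Variables (E : cond_data O -> Prop) (i0 ga : O).
Hypotheses (HE : forall P, E P -> valid P) (HI : forall P, E P -> iota P (gam P) = i0)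
  (HT : forall P Q, E P -> E Q -> P = Q \/ (ext Q P /\ caps Q P) \/ (ext P Q /\ caps P Q))
  (Hne : exists P, E P) (Hga_gt : forall P, E P -> lt (gam P) ga)
  (Hga_sup : forall c, lt c ga -> exists P, E P /\ lt c (gam P)).

Definition lim_top (i x : O) : Prop := exists P, E P /\ (Cl P (gam P) i x \/ x = gam P).

Definition lim_ext : cond_data O :=
  mkCond O ga
   (fun a => if excluded_middle_informative (a = ga) then i0 else
       epsilon (inhabits a) (fun j => exists P, E P /\ le a (gam P) /\ iota P a = j))
   (fun a i x => if excluded_middle_informative (a = ga) then lim_top i x else
       exists P, E P /\ le a (gam P) /\ Cl P a i x).

Lemma i0_lt_kap : lt i0 kap.
Proof.
  destruct Hne as [P e]. rewrite <- (HI P e).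
  apply (valid_iota_lt P (HE P e)); [apply valid_gam_limit; auto|apply le_refl].
Qed.

Lemma chain_agree P Q a : E P -> E Q -> is_limit a -> le a (gam P) -> le a (gam Q) ->
  iota P a = iota Q a /\
  forall i, le (iota P a) i -> lt i kap -> forall x, Cl P a i x <-> Cl Q a i x.
Proof.
  intros e e' la l l'. destruct (HT P Q e e') as [<-|[[[_ X] _]|[[_ X] _]]].
  - split; auto; tauto.
  - destruct (X a la l) as [X1 X2]. split; auto. intros i h1 h2 x. rewrite X2; auto; tauto.
  - destruct (X a la l') as [X1 X2]. split; auto. intros i h1 h2 x.
    rewrite X2; [tauto|congruence|auto].
Qed.

Lemma lim_ext_below P a : E P -> is_limit a -> le a (gam P) ->
  iota lim_ext a = iota P a /\
  forall i, le (iota P a) i -> lt i kap -> forall x, Cl lim_ext a i x <-> Cl P a i x.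
Proof.
  intros e la l. assert (n : a <> ga) by (intros ->; exact (le_not_lt _ _ l (Hga_gt P e))).
  simpl. destruct (excluded_middle_informative (a = ga)) as [h|_]; [tauto|]. split.
  - assert (S : exists j, exists P, E P /\ le a (gam P) /\ iota P a = j) by eauto.
    destruct (epsilon_spec (inhabits a) _ S) as [P' [e' [l' <-]]].
    apply (chain_agree P' P a e' e la l' l).
  - intros i hi hk x. split; [|eauto].
    intros [P' [e' [l' C]]]. destruct (chain_agree P' P a e' e la l' l) as [A1 A2].
    apply A2; auto. rewrite A1; auto.
Qed.

Lemma lim_ext_top_iota : iota lim_ext ga = i0.
Proof. simpl. destruct (excluded_middle_informative (ga = ga)); tauto. Qed.

Lemma lim_ext_top_Cl : Cl lim_ext ga = lim_top.
Proof. simpl. destruct (excluded_middle_informative (ga = ga)); tauto. Qed.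

Lemma lim_top_agree P i x : E P -> le i0 i -> lt i kap -> lt x (gam P) ->
  (lim_top i x <-> Cl P (gam P) i x).
Proof.
  intros e hi hk xP. split; [|intro C; exists P; auto].
  intros [Q [e' C]]. assert (VP := HE P e). assert (VQ := HE Q e').
  assert (hiP : le (iota P (gam P)) i) by (rewrite HI; auto).
  assert (hiQ : le (iota Q (gam Q)) i) by (rewrite HI; auto).
  destruct (HT P Q e e') as [<-|[[X K]|[X K]]].
  - destruct C as [C| ->]; [exact C|exfalso; exact (lt_irrefl _ xP)].
  - destruct C as [C| ->]; [apply (caps_Cl_below Q P i x); auto|].
    exfalso. exact (lt_asym _ _ (proj1 K) xP).
  - destruct C as [C| ->]; [|apply (proj2 (proj2 K) i hiQ hk)].
    apply (caps_Cl_below P Q i x); auto. apply (valid_Cl_lt Q VQ (gam Q) i); auto.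
    + apply valid_gam_limit; auto.
    + apply le_refl.
Qed.

Lemma lim_top_club i : le i0 i -> lt i kap -> club_in ga (lim_top i).
Proof.
  intros hi hk. split; [|split].
  - intros x [P [e [C| ->]]]; [|apply Hga_gt; auto].
    eapply lt_trans; [|apply (Hga_gt P e)].
    apply (valid_Cl_lt P (HE P e) (gam P) i); auto;
      [apply valid_gam_limit; auto|apply le_refl|rewrite HI; auto].
  - intros c lc. destruct (Hga_sup c lc) as [P [e l]]. exists (gam P). split; auto. exists P; auto.
  - intros d ld hex hc. destruct (Hga_sup d ld) as [P [e dP]].
    apply (lim_top_agree P i d e hi hk dP).
    apply (club_in_closed_transfer (gam P) _ (lim_top i) d); auto.
    + apply (valid_club P (HE P e)); [apply valid_gam_limit; auto|apply le_refl|rewrite HI; auto|auto].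
    + intros x xd. apply (lim_top_agree P i x e hi hk). eapply lt_trans; eauto.
Qed.

Lemma lim_top_mono i j x : le i0 i -> lt i j -> lt j kap -> lim_top i x -> lim_top j x.
Proof.
  intros hi ij hk [P [e C]]. exists P. split; auto. destruct C as [C|C]; auto. left.
  apply (valid_Cl_mono P (HE P e) (gam P) i j x);
    [apply valid_gam_limit; auto|apply le_refl|rewrite HI; auto|apply lt_le_incl|..]; auto.
Qed.

Lemma le_ga_split a : le a ga -> a = ga \/ exists P, E P /\ lt a (gam P).
Proof. intros [l| ->]; auto. Qed.

Lemma lim_ext_club a i : is_limit a -> le a ga -> le (iota lim_ext a) i -> lt i kap ->
  club_in a (Cl lim_ext a i).
Proof.
  intros la l hi hk. destruct (le_ga_split a l) as [->|[P [e aP]]].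
  - rewrite lim_ext_top_iota in hi. rewrite lim_ext_top_Cl. apply lim_top_club; auto.
  - destruct (lim_ext_below P a e la (lt_le_incl _ _ aP)) as [E1 E2]. rewrite E1 in hi.
    eapply club_in_ext; [intro x; symmetry; apply E2; auto|].
    apply (valid_club P (HE P e)); auto. apply lt_le_incl; auto.
Qed.

Lemma lim_ext_mono a i j : is_limit a -> le a ga -> le (iota lim_ext a) i -> lt i j -> lt j kap ->
  forall x, Cl lim_ext a i x -> Cl lim_ext a j x.
Proof.
  intros la l hi ij hk x. destruct (le_ga_split a l) as [->|[P [e aP]]].
  - rewrite lim_ext_top_iota in hi. rewrite lim_ext_top_Cl. apply lim_top_mono; auto.
  - destruct (lim_ext_below P a e la (lt_le_incl _ _ aP)) as [E1 E2]. rewrite E1 in hi.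
    assert (hik : lt i kap) by (eapply lt_trans; eauto).
    rewrite (E2 i hi hik x), (E2 j (le_trans _ _ _ hi (lt_le_incl _ _ ij)) hk x).
    apply (valid_Cl_mono P (HE P e) a i j x la); auto using lt_le_incl.
Qed.

Lemma lim_ext_coherent a c i : is_limit a -> is_limit c -> lt a c -> le c ga ->
  le (iota lim_ext c) i -> lt i kap -> acc_pt (Cl lim_ext c i) a ->
  le (iota lim_ext a) i /\ forall x, (Cl lim_ext c i x /\ lt x a) <-> Cl lim_ext a i x.
Proof.
  intros la lc ac l hi hk A. destruct (le_ga_split c l) as [->|[P [e cP]]].
  - rewrite lim_ext_top_iota in hi. rewrite lim_ext_top_Cl in A |- *.
    destruct (Hga_sup a ac) as [P [e aP]]. assert (VP := HE P e).
    destruct (valid_coherent_transfer P VP (lim_top i) (gam P) a i (valid_gam_limit P VP)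
                (le_refl _) ltac:(rewrite HI; auto) hk la (lt_le_incl _ _ aP)) as [E1 E2]; auto.
    { intros x xP. apply lim_top_agree; auto. }
    destruct (lim_ext_below P a e la (lt_le_incl _ _ aP)) as [F1 F2].
    rewrite F1. split; auto. intro x. rewrite F2; auto.
  - assert (aP : le a (gam P)) by (left; eauto using lt_trans).
    destruct (lim_ext_below P c e lc (lt_le_incl _ _ cP)) as [F1 F2]. rewrite F1 in hi.
    destruct (lim_ext_below P a e la aP) as [G1 G2].
    destruct (valid_coherent P (HE P e) a c i la lc ac (lt_le_incl _ _ cP) hi hk) as [E1 E2].
    { eapply acc_pt_mono; [|exact A]. intro x; apply F2; auto. }
    rewrite G1. split; auto. intro x. rewrite (F2 i hi hk x), (G2 i E1 hk x). auto.
Qed.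

Lemma lim_ext_threads a c : is_limit a -> is_limit c -> lt a c -> le c ga ->
  exists i, le (iota lim_ext c) i /\ lt i kap /\ acc_pt (Cl lim_ext c i) a.
Proof.
  intros la lc ac l. destruct (le_ga_split c l) as [->|[P [e cP]]].
  - destruct (Hga_sup a ac) as [P [e aP]]. assert (VP := HE P e).
    destruct (valid_threads P VP a (gam P) la (valid_gam_limit P VP) aP (le_refl _))
      as [i [h1 [h2 A]]].
    exists i. rewrite lim_ext_top_iota, lim_ext_top_Cl. rewrite (HI P e) in h1.
    split; auto. split; auto. eapply acc_pt_mono; [|exact A]. intros x C. exists P; auto.
  - destruct (lim_ext_below P c e lc (lt_le_incl _ _ cP)) as [F1 F2].
    destruct (valid_threads P (HE P e) a c la lc ac (lt_le_incl _ _ cP)) as [i [h1 [h2 A]]].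
    exists i. rewrite F1. split; auto. split; auto.
    eapply acc_pt_mono; [|exact A]. intros x C. apply F2; auto.
Qed.

Lemma lim_ext_valid : valid lim_ext.
Proof.
  split.
  { destruct Hne as [P e]. split; [exists (gam P); auto|].
    intros c lc. destruct (Hga_sup c lc) as [Q [e' l]]. exists (gam Q); auto. }
  split.
  { intros a la l. destruct (le_ga_split a l) as [->|[P [e aP]]].
    - rewrite lim_ext_top_iota. apply i0_lt_kap.
    - rewrite (proj1 (lim_ext_below P a e la (lt_le_incl _ _ aP))).
      apply (valid_iota_lt P (HE P e)); auto using lt_le_incl. }
  split; [exact lim_ext_club|]. split; [exact lim_ext_mono|].
  split; [exact lim_ext_coherent|exact lim_ext_threads].
Qed.

Lemma lim_ext_ext P : E P -> ext lim_ext P.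
Proof.
  intro e. split; [apply lt_le_incl, Hga_gt; auto|]. intros a la l.
  destruct (lim_ext_below P a e la l) as [E1 E2]. split; auto.
Qed.

Lemma lim_ext_caps P : E P -> caps lim_ext P.
Proof.
  intro e. assert (VP := HE P e). split; [apply Hga_gt; auto|].
  change (iota lim_ext ga = iota P (gam P) /\
    forall i, le (iota P (gam P)) i -> lt i kap -> acc_pt (Cl lim_ext ga i) (gam P)).
  rewrite lim_ext_top_iota, lim_ext_top_Cl, (HI P e). split; auto.
  intros i hi hk. split; [exists P; auto|].
  intros c lc. destruct (valid_club P VP (gam P) i (valid_gam_limit P VP) (le_refl _)
                           ltac:(rewrite HI; auto) hk) as [Hlt [Hunb _]].
  destruct (Hunb c lc) as [d [D cd]]. exists d. split; [exists P; auto|]. split; auto.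
Qed.

End LimitExtension.

Local Notation is_even := (Defs.is_even O lt).

Lemma succ_of_unique b b' a : succ_of b a -> succ_of b' a -> b = b'.
Proof. intros [l1 h1] [l2 h2]. apply le_antisym; [apply h2|apply h1]; auto. Qed.

Lemma succ_of_exists x a : lt x a -> exists c, succ_of x c /\ le c a.
Proof.
  intro h. destruct (exists_least (fun c => lt x c /\ le c a)) as [c [[c1 c2] c3]].
  { exists a; split; auto. apply le_refl. }
  exists c. split; auto. split; auto. intros w lw. apply not_lt_le. intro xw.
  apply (c3 w); auto. split; auto. apply lt_le_incl; eapply lt_le_trans; eauto.
Qed.

Lemma succ_of_below_limit x a : (forall b, lt b a -> exists c, lt b c /\ lt c a) -> lt x a ->
  exists c, succ_of x c /\ lt c a.
Proof.
  intros L h. destruct (succ_of_exists x a h) as [c [S [l| ->]]]; eauto.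
  destruct (L x h) as [d [d1 d2]]. exfalso. exact (le_not_lt _ _ (proj2 S d d2) d1).
Qed.

Lemma even_or_succ_even x : is_even x \/ exists b, is_even b /\ succ_of b x.
Proof.
  destruct WO as [W _]. induction (W x) as [x _ IH].
  destruct (classic (forall b, lt b x -> exists c, lt b c /\ lt c x)) as [L|L].
  - left; constructor; auto.
  - apply not_all_ex_not in L. destruct L as [b L].
    assert (lb : lt b x) by (apply NNPP; intro; apply L; intro; tauto).
    assert (S : succ_of b x).
    { split; auto. intros w lw. apply not_lt_le. intro bw. apply L; intros _; eauto. }
    destruct (IH b lb) as [Eb|[d [Ed Sd]]].
    + right; eauto.
    + left. eapply ev_ss; eauto.
Qed.

Lemma not_limit_of_succ_of w x : succ_of w x -> ~ (forall b, lt b x -> exists c, lt b c /\ lt c x).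
Proof.
  intros [wx hx] L. destruct (L w wx) as [c [wc cx]]. exact (le_not_lt _ _ (hx c cx) wc).
Qed.

Lemma succ_of_even_not_even x z : is_even x -> succ_of x z -> ~ is_even z.
Proof.
  intro H. revert z. induction H as [x L|u v x Eu IH S0 S1]; intros z Sz Ez;
    (inversion Ez as [z' Lz|u' v' z' Eu' Su' Sv']; subst;
      [exact (not_limit_of_succ_of x z Sz Lz)|]);
    assert (v' = x) by (eapply succ_of_unique; eauto); subst.
  - exact (not_limit_of_succ_of u' x Su' L).
  - assert (v = u') by (eapply succ_of_unique; eauto). subst. exact (IH _ S0 Eu').
Qed.

Lemma even_of_double_succ y b a : is_even a -> succ_of y b -> succ_of b a -> is_even y.
Proof.
  intros Ea Sy Sb. inversion Ea as [a' La|u v a' Eu Su Sv]; subst.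
  - exfalso. exact (not_limit_of_succ_of b a Sb La).
  - assert (v = b) by (eapply succ_of_unique; eauto). subst.
    assert (u = y) by (eapply succ_of_unique; eauto). subst. auto.
Qed.

Definition double_succ (a : O) : Prop :=
  exists yb : O * O, succ_of (fst yb) (snd yb) /\ succ_of (snd yb) a.

Lemma even_not_double_succ_limit a : is_even a -> ~ double_succ a ->
  forall b, lt b a -> exists c, lt b c /\ lt c a.
Proof.
  intros Ea N. inversion Ea as [a' La|u v a' Eu Su Sv]; subst; auto.
  exfalso; apply N. exists (u, v); simpl; auto.
Qed.

Lemma even_cofinal x a : (forall b, lt b a -> exists c, lt b c /\ lt c a) -> lt x a ->
  exists z, is_even z /\ le x z /\ lt z a.
Proof.
  intros L h. destruct (even_or_succ_even x) as [Ex|[b [Eb Sb]]].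
  - exists x; split; auto. split; auto. apply le_refl.
  - destruct (succ_of_below_limit x a L h) as [c [Sc lc]]. exists c. split; [eapply ev_ss; eauto|].
    split; auto. apply lt_le_incl, Sc.
Qed.

Lemma even_next y a : (forall b, lt b a -> exists c, lt b c /\ lt c a) -> lt y a -> is_even y ->
  exists z, is_even z /\ lt y z /\ lt z a.
Proof.
  intros L h Ey. destruct (succ_of_below_limit y a L h) as [c [Sc lc]].
  destruct (succ_of_below_limit c a L lc) as [d [Sd ld]]. exists d.
  split; [eapply ev_ss; eauto|]. split; auto. eapply lt_trans; [apply Sc|apply Sd].
Qed.

Local Notation Pcond := (Defs.Pcond O lt kap).
Local Notation Ple := (Defs.Ple O lt kap).

Definition cond_of (c : Pcond) : option (cond_data O) :=
  match c with Some p => Some (proj1_sig p) | None => None end.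

Definition to_Pcond (q : cond_data O) : Pcond :=
  match excluded_middle_informative (valid q) with
  | left h => Some (exist _ q h)
  | right _ => None
  end.

Lemma cond_of_valid c P : cond_of c = Some P -> valid P.
Proof. destruct c as [[q h]|]; simpl; intro e; inversion e; subst; auto. Qed.

Lemma cond_of_to_Pcond q : valid q -> cond_of (to_Pcond q) = Some q.
Proof. intro h. unfold to_Pcond. destruct (excluded_middle_informative (valid q)); simpl; tauto. Qed.

Lemma Ple_cond_of c1 c2 Q P : cond_of c1 = Some Q -> cond_of c2 = Some P ->
  (Ple c1 c2 <-> ext Q P).
Proof.
  destruct c1 as [[q1 h1]|], c2 as [[q2 h2]|]; simpl; intros e1 e2;
    inversion e1; inversion e2; subst; tauto.
Qed.

Lemma not_Ple_one c1 c2 P : cond_of c1 = None -> cond_of c2 = Some P -> ~ Ple c1 c2.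
Proof. destruct c1 as [[q1 h1]|], c2 as [[q2 h2]|]; simpl; intros e1 e2; try discriminate; tauto. Qed.

Lemma Ple_one c1 c2 : cond_of c2 = None -> Ple c1 c2.
Proof. destruct c1 as [[q1 h1]|], c2 as [[q2 h2]|]; simpl; intros e2; try discriminate; tauto. Qed.

Lemma Ple_refl c : Ple c c.
Proof. destruct c as [[q h]|]; simpl; auto. apply ext_refl. Qed.

Lemma Ple_trans r q p : Ple r q -> Ple q p -> Ple r p.
Proof.
  destruct r as [[r hr]|], q as [[q hq]|], p as [[p hp]|]; simpl; auto; try tauto.
  apply ext_trans.
Qed.

Definition play_ext a (f : {x | lt x a} -> Pcond) (x : O) : Pcond :=
  match excluded_middle_informative (lt x a) with
  | left h => f (exist _ x h)
  | right _ => None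
  end.

Lemma play_ext_restr a (p : O -> Pcond) x : lt x a -> play_ext a (restr O lt kap p a) x = p x.
Proof.
  intro h. unfold play_ext. destruct (excluded_middle_informative (lt x a)); [reflexivity|tauto].
Qed.

Definition even_moves a (g : O -> Pcond) (P : cond_data O) : Prop :=
  exists y, lt y a /\ is_even y /\ cond_of (g y) = Some P.

Lemma even_moves_play a p P :
  even_moves a (play_ext a (restr O lt kap p a)) P <-> even_moves a p P.
Proof.
  split; intros [y [l [e d]]]; exists y; split; auto; split; auto; rewrite play_ext_restr in *; auto.
Qed.

Definition strict_sup (E : cond_data O -> Prop) (u : O) : Prop :=
  (forall P, E P -> lt (gam P) u) /\ forall c, lt c u -> exists P, E P /\ lt c (gam P).

Lemma even_moves_strict_sup a g :
  (forall P, even_moves a g P -> exists Q, even_moves a g Q /\ lt (gam P) (gam Q)) ->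
  exists u, strict_sup (even_moves a g) u.
Proof.
  intro Hunb.
  pose (F := fun y : {x | lt x a} =>
    match cond_of (g (proj1_sig y)) with Some P => gam P | None => a end).
  destruct (image_bounded {x | lt x a} a (fun y => y) F) as [u0 hu0]; [intros ? ? ?; auto|].
  destruct (exists_least (fun u => forall P, even_moves a g P -> lt (gam P) u)) as [u [h1 h2]].
  { exists u0. intros P [y [ly [_ dy]]]. specialize (hu0 (exist _ y ly)). unfold F in hu0.
    simpl in hu0. rewrite dy in hu0. exact hu0. }
  exists u. split; auto. intros c lc. apply NNPP; intro N. apply (h2 c); auto.
  intros P e. apply NNPP; intro M. apply not_lt_le in M.
  destruct (Hunb P e) as [Q [e' l']]. apply N. exists Q. split; auto. eapply le_lt_trans; eauto.
Qed.

Definition succ_move (I II : Pcond) : Pcond :=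
  match cond_of I with
  | None => None
  | Some P => to_Pcond (succ_step P (match cond_of II with Some R => R | None => P end))
  end.

Definition lim_move a (g : O -> Pcond) : Pcond :=
  let E := even_moves a g in
  to_Pcond (lim_ext E (epsilon (inhabits a) (fun j => exists P, E P /\ iota P (gam P) = j))
                      (epsilon (inhabits a) (strict_sup E))).

Definition strat : strategy O lt kap := fun a f =>
  let g := play_ext a f in
  match excluded_middle_informative (double_succ a) with
  | left h => let yb := proj1_sig (constructive_indefinite_description _ h) in
              succ_move (g (snd yb)) (g (fst yb))
  | right _ =>
    match excluded_middle_informative (exists P, even_moves a g P) with
    | left _ => lim_move a g
    | right _ => None
    end
  end.

Lemma strat_cases a f :
  (exists y b, succ_of y b /\ succ_of b a /\
     strat a f = succ_move (play_ext a f b) (play_ext a f y)) \/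
  (~ double_succ a /\ (exists P, even_moves a (play_ext a f) P) /\
     strat a f = lim_move a (play_ext a f)) \/
  (~ double_succ a /\ ~ (exists P, even_moves a (play_ext a f) P) /\ strat a f = None).
Proof.
  unfold strat. destruct (excluded_middle_informative _) as [h|h].
  - left. destruct (constructive_indefinite_description _ h) as [[y b] [S1 S2]]. simpl. eauto.
  - right. destruct (excluded_middle_informative _) as [h'|h']; [left|right]; auto.
Qed.

Lemma play_upto_le a a' p : play_upto O lt kap strat a p -> le a' a -> play_upto O lt kap strat a' p.
Proof.
  intros [h1 h2] l. split.
  - intros x y xy ya. apply h1; auto. eapply lt_le_trans; eauto.
  - intros x xa. apply h2. eapply lt_le_trans; eauto.
Qed.

Definition good_move a (p : O -> Pcond) (q : Pcond) : Prop :=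
  (forall x, lt x a -> Ple q (p x)) /\ ((forall x, ~ lt x a) -> q = None) /\
  (forall x, lt x a -> is_even x -> forall P, cond_of (p x) = Some P ->
     exists Q, cond_of q = Some Q /\ caps Q P).

Section GoodMoves.
Variables (a : O) (p : O -> Pcond).
Hypotheses (Ea : is_even a) (Hp : play_upto O lt kap strat a p)
  (IH : forall y, lt y a -> is_even y -> good_move y p (p y)).

Lemma play_decreasing x y : lt x y -> lt y a -> Ple (p y) (p x).
Proof. apply Hp. Qed.

Lemma even_moves_caps y z P Q : lt y z -> lt z a -> is_even y -> is_even z ->
  cond_of (p y) = Some P -> cond_of (p z) = Some Q -> ext Q P /\ caps Q P.
Proof.
  intros yz za Ey Ez dy dz. split; [apply (Ple_cond_of _ _ _ _ dz dy), play_decreasing; auto|].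
  destruct (proj2 (proj2 (IH z za Ez)) y yz Ey P dy) as [Q' [dQ' C]].
  rewrite dz in dQ'. inversion dQ'; subst; auto.
Qed.

Lemma even_moves_chain P Q : even_moves a p P -> even_moves a p Q ->
  P = Q \/ (ext Q P /\ caps Q P) \/ (ext P Q /\ caps P Q).
Proof.
  intros [y [ly [Ey dy]]] [z [lz [Ez dz]]]. destruct (lt_total y z) as [l|[<-|l]].
  - right; left. apply (even_moves_caps y z); auto.
  - left. congruence.
  - right; right. apply (even_moves_caps z y); auto.
Qed.

Lemma even_moves_unbounded P : (forall b, lt b a -> exists c, lt b c /\ lt c a) ->
  even_moves a p P -> exists Q, even_moves a p Q /\ lt (gam P) (gam Q).
Proof.
  intros L [y [ly [Ey dy]]]. destruct (even_next y a L ly Ey) as [z [Ez [yz za]]].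
  destruct (proj2 (proj2 (IH z za Ez)) y yz Ey P dy) as [Q [dQ [lPQ _]]].
  exists Q. split; auto. exists z. auto.
Qed.

Lemma Ple_below_limit q : (forall b, lt b a -> exists c, lt b c /\ lt c a) ->
  (forall P, even_moves a p P -> exists Q, cond_of q = Some Q /\ ext Q P) ->
  forall x, lt x a -> Ple q (p x).
Proof.
  intros L Hq x lx. destruct (cond_of (p x)) as [Px|] eqn:EX; [|apply Ple_one; auto].
  destruct (even_cofinal x a L lx) as [z [Ez [xz za]]].
  assert (PZ : Ple (p z) (p x))
    by (destruct xz as [l| <-]; [apply play_decreasing|apply Ple_refl]; auto).
  destruct (cond_of (p z)) as [Pz|] eqn:EZ; [|exfalso; exact (not_Ple_one _ _ _ EZ EX PZ)].
  destruct (Hq Pz) as [Q [DQ XQ]]; [exists z; auto|].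
  eapply Ple_trans; [|exact PZ]. apply (Ple_cond_of _ _ _ _ DQ EZ); auto.
Qed.

Lemma good_move_succ y b : succ_of y b -> succ_of b a -> good_move a p (succ_move (p b) (p y)).
Proof.
  intros Sy Sb. assert (lb : lt b a) by apply Sb.
  assert (ly : lt y a) by (eapply lt_trans; [apply Sy|exact lb]).
  assert (Ey : is_even y) by (eapply even_of_double_succ; eauto).
  assert (below_y : forall x, lt x a -> is_even x -> le x y).
  { intros x lx Ex. destruct (proj2 Sb x lx) as [xb| ->];
      [apply (proj2 Sy x xb)|exfalso; exact (succ_of_even_not_even y b Ey Sy Ex)]. }
  assert (PB : forall x, lt x a -> Ple (p b) (p x)).
  { intros x lx. destruct (proj2 Sb x lx) as [l| ->]; [apply play_decreasing|apply Ple_refl]; auto. }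
  unfold succ_move. destruct (cond_of (p b)) as [P|] eqn:EB.
  2:{ split; [|split; [intro N; exfalso; exact (N b lb)|]].
      - intros x lx. destruct (cond_of (p x)) as [Px|] eqn:EX; [|apply Ple_one; auto].
        exfalso. exact (not_Ple_one _ _ _ EB EX (PB x lx)).
      - intros x lx _ P' EX. exfalso. exact (not_Ple_one _ _ _ EB EX (PB x lx)). }
  assert (VP := cond_of_valid _ _ EB).
  set (R := match cond_of (p y) with Some R => R | None => P end).
  assert (VR : valid R) by (unfold R; destruct (cond_of (p y)) eqn:ER; eauto using cond_of_valid).
  assert (XR : ext P R).
  { unfold R. destruct (cond_of (p y)) as [R'|] eqn:ER; [|apply ext_refl].
    apply (Ple_cond_of _ _ _ _ EB ER), PB; auto. }
  destruct (succ_step_correct P R VP VR XR) as [VQ [XQ CQ]].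
  assert (DQ := cond_of_to_Pcond _ VQ).
  split; [|split; [intro N; exfalso; exact (N b lb)|]].
  - intros x lx. eapply Ple_trans; [|exact (PB x lx)]. apply (Ple_cond_of _ _ _ _ DQ EB); auto.
  - intros x lx Ex P' EX. exists (succ_step P R). split; auto.
    destruct (cond_of (p y)) as [R'|] eqn:ER; subst R.
    + destruct (below_y x lx Ex) as [xy| ->]; [|congruence].
      apply (caps_trans _ R'); eauto using cond_of_valid, ext_trans.
      apply (even_moves_caps x y); auto.
    + exfalso. destruct (below_y x lx Ex) as [xy| ->]; [|congruence].
      exact (not_Ple_one _ _ _ ER EX (play_decreasing x y xy ly)).
Qed.

Lemma good_move_lim : (forall b, lt b a -> exists c, lt b c /\ lt c a) ->
  (exists P, even_moves a (play_ext a (restr O lt kap p a)) P) ->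
  good_move a p (lim_move a (play_ext a (restr O lt kap p a))).
Proof.
  intros L Hne. unfold lim_move.
  set (E := even_moves a (play_ext a (restr O lt kap p a))).
  assert (EE : forall P, E P <-> even_moves a p P) by apply even_moves_play.
  assert (HE : forall P, E P -> valid P) by (intros P [y [_ [_ d]]]; eapply cond_of_valid; eauto).
  assert (HT : forall P Q, E P -> E Q -> P = Q \/ (ext Q P /\ caps Q P) \/ (ext P Q /\ caps P Q))
    by (intros P Q e e'; apply even_moves_chain; apply EE; auto).
  set (i0 := epsilon (inhabits a) (fun j => exists P, E P /\ iota P (gam P) = j)).
  assert (HI : forall P, E P -> iota P (gam P) = i0).
  { assert (exists P, E P /\ iota P (gam P) = i0) as [P1 [e1 <-]].
    { apply epsilon_spec. destruct Hne as [P e]; eauto. }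
    intros P e. destruct (HT P P1 e e1) as [->|[[_ [_ [h _]]]|[_ [_ [h _]]]]]; auto. }
  set (ga := epsilon (inhabits a) (strict_sup E)).
  assert (Hsup : strict_sup E ga).
  { apply epsilon_spec, even_moves_strict_sup. intros P e.
    destruct (even_moves_unbounded P L (proj1 (EE P) e)) as [Q [e' l]]. exists Q. split; auto.
    apply EE; auto. }
  destruct Hsup as [Hgt Hlub].
  assert (DQ : cond_of (to_Pcond (lim_ext E i0 ga)) = Some (lim_ext E i0 ga))
    by (apply cond_of_to_Pcond, lim_ext_valid; auto).
  split; [|split].
  - apply Ple_below_limit; auto. intros P e. exists (lim_ext E i0 ga). split; auto.
    apply lim_ext_ext; auto. apply EE; auto.
  - intro N. exfalso. destruct Hne as [P [y [ly _]]]. exact (N y ly).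
  - intros x lx Ex P EX. exists (lim_ext E i0 ga). split; auto.
    apply lim_ext_caps; auto. apply EE. exists x; auto.
Qed.

Lemma good_move_none : (forall b, lt b a -> exists c, lt b c /\ lt c a) \/ (forall x, ~ lt x a) ->
  ~ (exists P, even_moves a (play_ext a (restr O lt kap p a)) P) -> good_move a p None.
Proof.
  intros L N. assert (K : forall x, lt x a -> cond_of (p x) = None).
  { intros x lx. destruct (cond_of (p x)) as [Px|] eqn:EX; auto. exfalso.
    destruct L as [L|L]; [|exact (L x lx)].
    destruct (even_cofinal x a L lx) as [z [Ez [xz za]]].
    assert (PZ : Ple (p z) (p x))
      by (destruct xz as [l| <-]; [apply play_decreasing|apply Ple_refl]; auto).
    destruct (cond_of (p z)) as [Pz|] eqn:EZ; [|exact (not_Ple_one _ _ _ EZ EX PZ)].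
    apply N. exists Pz. apply even_moves_play. exists z; auto. }
  split; [|split; auto].
  - intros x lx. apply Ple_one; auto.
  - intros x lx _ P EX. rewrite K in EX; auto. discriminate.
Qed.

End GoodMoves.

Lemma strat_good_move a : is_even a -> forall p, play_upto O lt kap strat a p ->
  good_move a p (strat a (restr O lt kap p a)).
Proof.
  destruct WO as [W _]. induction (W a) as [a _ IH]. intros Ea p Hp.
  assert (IHp : forall y, lt y a -> is_even y -> good_move y p (p y)).
  { intros y ly Ey. rewrite (proj2 Hp y ly Ey). apply IH; auto.
    apply (play_upto_le a y p Hp). apply lt_le_incl; auto. }
  destruct (strat_cases a (restr O lt kap p a))
    as [[y [b [Sy [Sb ->]]]]|[[N [Hne ->]]|[N [Hn ->]]]].
  - assert (lb : lt b a) by apply Sb. assert (ly : lt y a) by (eapply lt_trans; [apply Sy|exact lb]).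
    rewrite !play_ext_restr; auto. apply good_move_succ; auto.
  - apply good_move_lim; auto. apply (even_not_double_succ_limit a Ea N).
  - apply good_move_none; auto.
    destruct (classic (exists x, lt x a)) as [[x lx]|M].
    + left. apply (even_not_double_succ_limit a Ea N).
    + right. intros x lx; apply M; eauto.
Qed.

Lemma strat_winning : winning O lt kap strat.
Proof. intros a Ea p Hp. destruct (strat_good_move a Ea p Hp) as [A [B _]]. split; auto. Qed.

End StrategicClosure.

Theorem mainTheorem19 (O : Type) (lt : O -> O -> Prop) (kap : O) :
  is_wellorder O lt ->
  lambda_infinite_regular_cardinal O lt ->
  kappa_infinite_regular_cardinal O lt kap ->
  strategically_closed O lt kap.
Proof.
  intros WO LR KR. exists (strat O lt kap). apply strat_winning; auto.
Qed.
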